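(* Let $n\geq 2$, $\lambda>n$, $0<\mu<1$, and $h(x,y)=(\lambda x,\mu y)$. Let $f:\mathbb{R}^2\to\mathbb{R}^2$ be an orientation preserving homeomorphism with bounded displacement (there is $K>0$ with $|f(p)-p|\leq K$ for all $p$) such that $hfh^{-1}=f^n$. Then $f=\mathrm{id}$. *)

From Stdlib Require Import Reals.
Open Scope R_scope.

Definition pt : Type := (R * R)%type.

Definition dist2 (p q : pt) : R :=
  sqrt ((fst p - fst q) ^ 2 + (snd p - snd q) ^ 2).

Definition continuous2 (f : pt -> pt) : Prop :=
  forall p eps, 0 < eps ->
    exists delta, 0 < delta /\
      forall q, dist2 q p < delta -> dist2 (f q) (f p) < eps.

Definition homeomorphism2 (f : pt -> pt) : Prop :=
  exists g : pt -> pt,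
    continuous2 f /\ continuous2 g /\
    (forall p, g (f p) = p) /\ (forall p, f (g p) = p).

(* the loop t |-> f(p + r(cos 2 pi t, sin 2 pi t)), t in [0,1],
   winds exactly once (positively) around f p: there is a continuous
   angle function theta with f(c(t)) - f p = |f(c(t)) - f p| (cos theta t, sin theta t)
   and theta 1 - theta 0 = 2 pi. *)
Definition circle_pt (p : pt) (r t : R) : pt :=
  (fst p + r * cos (2 * PI * t), snd p + r * sin (2 * PI * t)).

Definition winds_once_around (f : pt -> pt) (p : pt) (r : R) : Prop :=
  exists theta : R -> R,
    continuity theta /\
    (forall t, 0 <= t <= 1 ->
       let q := f (circle_pt p r t) in
       fst q - fst (f p) = dist2 q (f p) * cos (theta t) /\
       snd q - snd (f p) = dist2 q (f p) * sin (theta t)) /\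
    theta 1 - theta 0 = 2 * PI.

(* orientation preserving: local degree +1 at every point, i.e. the image
   of every positively oriented small circle around p has winding number 1
   around f p. *)
Definition orientation_preserving2 (f : pt -> pt) : Prop :=
  forall p r, 0 < r -> winds_once_around f p r.

Definition hmap (lam mu : R) (p : pt) : pt := (lam * fst p, mu * snd p).
Definition hinv (lam mu : R) (p : pt) : pt := (fst p / lam, snd p / mu).

(* The first coordinate of the conjugacy [h f h^-1 = f^n] reads
   [lam * a (h^-1 q) = (horizontal displacement of f^n at q)], where [a] is the
   horizontal displacement of f; since f^n displaces by at most [n * sup |a|],
   we get [sup |a| <= (n / lam) sup |a|], so [a = 0] and f maps every vertical
   line to itself.  On a vertical line f is a continuous injection of R with
   bounded displacement, hence increasing, so f^n displaces each point at least
   as far as f does.  The second coordinate of the conjugacy then gives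
   [|b q| <= mu |b (h^-1 q)|] for the vertical displacement [b], and boundedness
   of [b] forces [b = 0]. *)

From Stdlib Require Import Reals Lra Lia.
Open Scope R_scope.

Lemma Rabs_fst_le_dist2 (p q : pt) : Rabs (fst p - fst q) <= dist2 p q.
Proof.
  unfold dist2; rewrite <- sqrt_Rsqr_abs; apply sqrt_le_1_alt.
  pose proof (Rle_0_sqr (snd p - snd q)); unfold Rsqr in *; simpl; nra.
Qed.

Lemma Rabs_snd_le_dist2 (p q : pt) : Rabs (snd p - snd q) <= dist2 p q.
Proof.
  unfold dist2; rewrite <- sqrt_Rsqr_abs; apply sqrt_le_1_alt.
  pose proof (Rle_0_sqr (fst p - fst q)); unfold Rsqr in *; simpl; nra.
Qed.

Lemma dist2_same_fst (x y y' : R) : dist2 (x, y') (x, y) = Rabs (y' - y).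
Proof. unfold dist2; simpl; rewrite <- sqrt_Rsqr_abs; f_equal; unfold Rsqr; ring. Qed.

Lemma continuous2_snd_on_vertical (f : pt -> pt) (x : R) :
  continuous2 f -> continuity (fun y => snd (f (x, y))).
Proof.
  intros Hf y eps Heps.
  destruct (Hf (x, y) eps Heps) as [delta [Hdelta Hclose]].
  exists delta; split; [exact Hdelta|].
  intros z [_ Hz]; unfold R_dist in *; simpl in *.
  eapply Rle_lt_trans; [apply Rabs_snd_le_dist2|].
  apply Hclose; rewrite dist2_same_fst; exact Hz.
Qed.

Lemma bounded_contraction_eq0 (A : Type) (u : A -> R) (c K : R) :
  0 <= c < 1 -> (forall q, Rabs (u q) <= K) ->
  (forall B, (forall q, Rabs (u q) <= B) -> forall q, Rabs (u q) <= c * B) ->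
  forall q, u q = 0.
Proof.
  intros Hc HK Hcontract q.
  assert (Hpow : forall k q, Rabs (u q) <= c ^ k * K).
  { induction k as [|k IH]; intro q'; simpl.
    - rewrite Rmult_1_l; apply HK.
    - rewrite Rmult_assoc; apply Hcontract, IH. }
  destruct (Req_dec (u q) 0) as [|Hne]; [assumption|exfalso].
  assert (Hpos : 0 < Rabs (u q)) by (apply Rabs_pos_lt; exact Hne).
  assert (HKpos : 0 < K) by (specialize (HK q); lra).
  destruct (pow_lt_1_zero c ltac:(rewrite Rabs_right; lra) (Rabs (u q) / K))
    as [N HN]; [apply Rdiv_lt_0_compat; lra|].
  specialize (HN N (le_n N)).
  rewrite Rabs_right in HN by (apply Rle_ge, pow_le; lra).
  assert (Hsmall : c ^ N * K < Rabs (u q)).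
  { apply (Rmult_lt_compat_r K) in HN; [|lra].
    unfold Rdiv in HN; rewrite Rmult_assoc, Rinv_l, Rmult_1_r in HN; lra. }
  specialize (Hpow N q); lra.
Qed.

Lemma iter_displacement_le (A : Type) (g : A -> A) (phi : A -> R) (B : R) :
  (forall q, Rabs (phi (g q) - phi q) <= B) ->
  forall m p, Rabs (phi (Nat.iter m g p) - phi p) <= INR m * B.
Proof.
  intros HB m p; induction m as [|m IH].
  - simpl; rewrite Rminus_diag, Rabs_R0; lra.
  - rewrite S_INR; simpl Nat.iter.
    replace (phi (g (Nat.iter m g p)) - phi p) with
      ((phi (g (Nat.iter m g p)) - phi (Nat.iter m g p)) + (phi (Nat.iter m g p) - phi p))
      by ring.
    eapply Rle_trans; [apply Rabs_triang|].
    pose proof (HB (Nat.iter m g p)); lra.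
Qed.

Lemma bounded_displacement_inj_increasing (phi : R -> R) (K : R) :
  continuity phi -> (forall a b, phi a = phi b -> a = b) ->
  (forall y, Rabs (phi y - y) <= K) ->
  forall a b, a < b -> phi a < phi b.
Proof.
  intros Hcont Hinj HK a b Hab.
  destruct (Rtotal_order (phi a) (phi b)) as [Hlt|[Heq|Hgt]]; [exact Hlt| |exfalso].
  - apply Hinj in Heq; lra.
  - (* phi c - c >= -K puts phi c above phi a for c far enough to the right,
       so by the IVT phi takes the value phi a again at some z > b > a *)
    set (c := Rmax b (phi a) + K + 1).
    pose proof (Rmax_l b (phi a)); pose proof (Rmax_r b (phi a)).
    pose proof (Rabs_pos (phi b - b)).
    assert (Hc : - K <= phi c - c).
    { pose proof (Rle_abs (- (phi c - c))); rewrite Rabs_Ropp in *.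
      pose proof (HK c); lra. }
    destruct (IVT (fun t => phi t - phi a) b c) as [z [Hz Hphiz]].
    + apply continuity_minus; [exact Hcont | apply continuity_const; now intros ? ?].
    + unfold c; pose proof (HK b); lra.
    + lra.
    + unfold c in *; lra.
    + assert (Hza : phi z = phi a) by lra.
      apply Hinj in Hza; lra.
Qed.

Lemma iter_orbit_chain (phi : R -> R) (rel : R -> R -> Prop) :
  (forall a, rel a a) -> (forall a b c, rel a b -> rel b c -> rel a c) ->
  (forall a b, rel a b -> rel (phi a) (phi b)) ->
  forall y, rel y (phi y) -> forall m, rel (phi y) (Nat.iter (S m) phi y).
Proof.
  intros Hrefl Htrans Hmono y Hy.
  assert (Hstep : forall k, rel (Nat.iter k phi y) (Nat.iter (S k) phi y)).
  { induction k as [|k IH]; [exact Hy | exact (Hmono _ _ IH)]. }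
  induction m as [|m IH]; [apply Hrefl | exact (Htrans _ _ _ IH (Hstep (S m)))].
Qed.

Lemma monotone_iter_displacement (phi : R -> R) :
  (forall a b, a <= b -> phi a <= phi b) ->
  forall y m, (1 <= m)%nat -> Rabs (phi y - y) <= Rabs (Nat.iter m phi y - y).
Proof.
  intros Hmono y [|m] Hm; [lia|].
  destruct (Rle_lt_dec y (phi y)) as [Hup|Hdown].
  - pose proof (iter_orbit_chain phi Rle Rle_refl Rle_trans Hmono y Hup m).
    rewrite !Rabs_right; lra.
  - assert (Hmono_ge : forall a b, a >= b -> phi a >= phi b)
      by (intros a b Hab; apply Rle_ge, Hmono, Rge_le, Hab).
    pose proof (iter_orbit_chain phi Rge Rge_refl Rge_trans Hmono_ge y
                  (Rgt_ge _ _ Hdown) m).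
    rewrite !Rabs_left1; lra.
Qed.

Section Conjugacy.

Variables (n : nat) (lam mu K : R) (f : pt -> pt).
Hypothesis n_ge1 : (1 <= n)%nat.
Hypothesis lam_gt_n : INR n < lam.
Hypothesis mu_bounds : 0 < mu < 1.
Hypothesis f_continuous : continuous2 f.
Hypothesis f_injective : forall p q, f p = f q -> p = q.
Hypothesis f_bounded : forall p, dist2 (f p) p <= K.
Hypothesis f_conj : forall p, hmap lam mu (f (hinv lam mu p)) = Nat.iter n f p.

Lemma lam_gt0 : 0 < lam.
Proof. pose proof (pos_INR n); lra. Qed.

Lemma hinv_hmap p : hinv lam mu (hmap lam mu p) = p.
Proof.
  pose proof lam_gt0; destruct p as [x y]; unfold hinv, hmap; simpl.
  f_equal; field; lra.
Qed.

Lemma conj_fst_displacement q :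
  lam * (fst (f (hinv lam mu q)) - fst (hinv lam mu q)) =
  fst (Nat.iter n f q) - fst q.
Proof. pose proof lam_gt0; rewrite <- f_conj; unfold hmap, hinv; simpl; field; lra. Qed.

Lemma conj_snd_displacement q :
  mu * (snd (f (hinv lam mu q)) - snd (hinv lam mu q)) =
  snd (Nat.iter n f q) - snd q.
Proof. rewrite <- f_conj; unfold hmap, hinv; simpl; field; lra. Qed.

Lemma f_preserves_fst p : fst (f p) = fst p.
Proof.
  pose proof lam_gt0 as Hlam.
  apply Rminus_diag_uniq; revert p.
  apply (bounded_contraction_eq0 _ (fun p => fst (f p) - fst p) (INR n / lam) K).
  - split; [apply Rle_mult_inv_pos; [apply pos_INR | exact Hlam]|].
    apply (Rmult_lt_reg_r lam); [exact Hlam|].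
    unfold Rdiv; rewrite Rmult_assoc, Rinv_l, Rmult_1_r; lra.
  - intro q; eapply Rle_trans; [apply Rabs_fst_le_dist2 | apply f_bounded].
  - intros B HB q.
    rewrite <- (hinv_hmap q).
    apply (Rmult_le_reg_l lam); [exact Hlam|].
    rewrite <- (Rabs_pos_eq lam) at 1 by lra.
    rewrite <- Rabs_mult, conj_fst_displacement.
    replace (lam * (INR n / lam * B)) with (INR n * B) by (field; lra).
    exact (iter_displacement_le _ f fst B HB n _).
Qed.

Lemma f_on_vertical x y : f (x, y) = (x, snd (f (x, y))).
Proof. rewrite (surjective_pairing (f (x, y))) at 1; rewrite f_preserves_fst; reflexivity. Qed.

Lemma iter_on_vertical x y m :
  Nat.iter m f (x, y) = (x, Nat.iter m (fun z => snd (f (x, z))) y).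
Proof.
  induction m as [|m IH]; [reflexivity|].
  simpl; rewrite IH; apply f_on_vertical.
Qed.

Lemma f_increasing_on_vertical x :
  forall a b, a < b -> snd (f (x, a)) < snd (f (x, b)).
Proof.
  apply (bounded_displacement_inj_increasing _ K).
  - exact (continuous2_snd_on_vertical f x f_continuous).
  - intros a b Heq; cbv beta in Heq.
    assert (Hf : f (x, a) = f (x, b))
      by (rewrite (f_on_vertical x a), (f_on_vertical x b), Heq; reflexivity).
    apply f_injective in Hf; injection Hf; auto.
  - intro y; eapply Rle_trans;
      [apply (Rabs_snd_le_dist2 (f (x, y)) (x, y)) | apply f_bounded].
Qed.

Lemma snd_displacement_expanding q :
  Rabs (snd (f q) - snd q) <=
  mu * Rabs (snd (f (hinv lam mu q)) - snd (hinv lam mu q)).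
Proof.
  rewrite <- (Rabs_pos_eq mu) at 1 by lra.
  rewrite <- Rabs_mult, conj_snd_displacement.
  destruct q as [x y]; rewrite iter_on_vertical; simpl snd.
  apply (monotone_iter_displacement (fun z => snd (f (x, z)))); [|exact n_ge1].
  intros a b [Hab|<-]; [left; apply f_increasing_on_vertical, Hab | right; reflexivity].
Qed.

Lemma f_fixes_all p : f p = p.
Proof.
  assert (Hsnd : snd (f p) - snd p = 0).
  { revert p; apply (bounded_contraction_eq0 _ (fun p => snd (f p) - snd p) mu K).
    - lra.
    - intro q; eapply Rle_trans; [apply Rabs_snd_le_dist2 | apply f_bounded].
    - intros B HB q; eapply Rle_trans; [apply snd_displacement_expanding|].
      apply Rmult_le_compat_l; [lra | apply HB]. }
  destruct p as [x y]; simpl in Hsnd.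
  rewrite f_on_vertical; f_equal; lra.
Qed.

End Conjugacy.

Theorem lemma3p1 (n : nat) (lam mu : R) (f : pt -> pt) :
  (2 <= n)%nat -> INR n < lam -> 0 < mu < 1 ->
  homeomorphism2 f -> orientation_preserving2 f ->
  (exists K, 0 < K /\ forall p, dist2 (f p) p <= K) ->
  (forall p, hmap lam mu (f (hinv lam mu p)) = Nat.iter n f p) ->
  forall p, f p = p.
Proof.
  intros Hn Hlam Hmu [g [Hcont [_ [Hgf _]]]] _ [K [_ Hbounded]] Hconj.
  assert (Hinj : forall p q, f p = f q -> p = q)
    by (intros p q Heq; rewrite <- (Hgf p), <- (Hgf q), Heq; reflexivity).
  exact (f_fixes_all n lam mu K f ltac:(lia) Hlam Hmu Hcont Hinj Hbounded Hconj).
Qed.
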